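(* Let $U$ be a solution curve of the normalized two-dimensional capillarity equation, i.e. a $C^2$ function $U(\xi)$ on an open interval with inclination angle $\psi=\arctan U_\xi\in(-\pi/2,\pi/2)$, satisfying $(\sin\psi)_\xi=U$, $U_\xi=\tan\psi$, and let $c$ be the constant with $\tfrac12U^2+\cos\psi\equiv c$ along the curve. Suppose $c>1$ and set $\delta=c-1$. Then: (i) the length $l$ of any $\xi$-interval over which the solution curve (as a graph with $-\pi/2<\psi<\pi/2$) can extend satisfies $l<\sqrt{2/\delta}$; (ii) any such solution curve that is positive at some point can be extended (as a graph, with $-\pi/2<\psi<\pi/2$) across a unique point at which it attains a positive minimum value $U_0$; (iii) if each such positive solution curve (with $c>1$), maximally extended as a graph over the parameter interval $-\pi/2<\psi<\pi/2$, is translated horizontally so that its minimum point lies at $\xi=0$, then the set of all these normalized curves simply covers a domain $\mathcal{D}^+$ (the union of their graphs), i.e. each point of $\mathcal{D}^+$ lies on exactly one of the normalized curves.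
   Context: The capillarity equation in one variable, in non-dimensional coordinates $\xi=\sqrt{\kappa}x$, $U=\sqrt{\kappa}u$ ($\kappa>0$ the capillarity constant), reads $(\sin\psi)_\xi=U$, $U_\xi=\tan\psi$, where $\psi$ is the inclination angle of the graph $U(\xi)$. Every solution satisfies the first integral $\tfrac12U^2+\cos\psi=c$ for a constant $c$. ''Solution curve'' here means a graph $U(\xi)$ solving this system with $-\pi/2<\psi<\pi/2$. *)

From Stdlib Require Import Reals.
From Coquelicot Require Import Coquelicot.
Open Scope R_scope.

(* inclination angle psi = arctan U_xi, automatically in (-pi/2, pi/2);
   hence U_xi = tan psi holds by definition. *)
Definition psi (U : R -> R) (x : R) : R := atan (Derive U x).

Definition sol (a b : R) (U : R -> R) : Prop :=
  a < b /\
  forall x, a < x < b ->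
    ex_derive U x /\ ex_derive (Derive U) x /\
    continuous (Derive (Derive U)) x /\
    is_derive (fun y => sin (psi U y)) x (U x).

Definition first_int (c a b : R) (U : R -> R) : Prop :=
  forall x, a < x < b -> U x ^ 2 / 2 + cos (psi U x) = c.

Definition extends (a' b' : R) (V : R -> R) (a b : R) (U : R -> R) : Prop :=
  a' <= a /\ b <= b' /\ forall x, a < x < b -> V x = U x.

Definition maximal_sol (a b : R) (U : R -> R) : Prop :=
  sol a b U /\
  forall a' b' V, sol a' b' V -> extends a' b' V a b U -> a' = a /\ b' = b.

Definition normalized_curve (a b : R) (U : R -> R) : Prop :=
  maximal_sol a b U /\
  (exists c, c > 1 /\ first_int c a b U) /\
  (forall x, a < x < b -> 0 < U x) /\
  a < 0 < b /\
  (forall x, a < x < b -> U 0 <= U x).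

From Stdlib Require Import Reals Lra ClassicalEpsilon FunctionalExtensionality Ranalysis5.
From Coquelicot Require Import Coquelicot.
Open Scope R_scope.

(* By the first integral U^2 = 2 (c - cos psi) > 0 when c > 1, so a solution has a constant
   sign, and by the symmetry U -> -U we may assume U > 0.  Then psi' = U / cos psi > 0, so along
   the curve the abscissa is an increasing function of the inclination: xi + K = G_c(psi) with
   G_c(t) = int_0^t cos s / sqrt (2 (c - cos s)) ds.
   (i) The width of a solution is at most G_c(PI/2) - G_c(-PI/2) < 2 / sqrt (2 (c - 1)).
   (ii) Inverting G_c gives the maximal curve sqrt (2 (c - cos (G_c^-1 (xi + K)))), whose unique
   minimum is at psi = 0.
   (iii) Normalization forces K = 0.  For c1 < c2, G_c1 - G_c2 increases and vanishes at 0, so two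
   curves over a common abscissa have |psi1| <= |psi2|, whence U1 < U2; for c1 = c2 they have the
   same psi, hence the same U, on their common domain, and maximality makes the domains equal. *)

Lemma is_derive_continuity_pt (f : R -> R) x l : is_derive f x l -> continuity_pt f x.
Proof.
  intros Hf. apply continuity_pt_filterlim.
  apply (ex_derive_continuous (K := R_AbsRing) (V := R_NormedModule)). now exists l.
Qed.

Lemma is_derive_mvt (f df : R -> R) x y : x < y ->
  (forall z, x <= z <= y -> is_derive f z (df z)) ->
  exists z, x < z < y /\ f y - f x = df z * (y - x).
Proof.
  intros Hxy Hd. destruct (MVT_cor2 f df x y Hxy) as [z [E Hz]].
  - intros z Hz. apply is_derive_Reals, Hd, Hz.
  - now exists z.
Qed.

Lemma incr_of_is_derive_pos (f df : R -> R) x y : x < y ->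
  (forall z, x <= z <= y -> is_derive f z (df z)) ->
  (forall z, x < z < y -> 0 < df z) -> f x < f y.
Proof.
  intros Hxy Hd Hp. destruct (is_derive_mvt f df x y Hxy Hd) as [z [Hz E]].
  specialize (Hp z Hz). nra.
Qed.

Lemma const_of_is_derive_0 (f : R -> R) a b x y :
  (forall z, a < z < b -> is_derive f z 0) -> a < x < b -> a < y < b -> f x = f y.
Proof.
  intros Hd Hx Hy.
  destruct (Rtotal_order x y) as [Hxy | [-> | Hxy]]; [| reflexivity |].
  - destruct (is_derive_mvt f (fun _ => 0) x y Hxy) as [z [_ E]]; [intros; apply Hd; lra | lra].
  - destruct (is_derive_mvt f (fun _ => 0) y x Hxy) as [z [_ E]]; [intros; apply Hd; lra | lra].
Qed.

Lemma locally_interval p q x : p < x < q -> locally x (fun y => p < y < q).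
Proof.
  intros Hx. assert (He : 0 < Rmin (x - p) (q - x)) by (apply Rmin_pos; lra).
  exists (mkposreal _ He). intros y Hy. apply Rabs_def2 in Hy. simpl in Hy.
  unfold minus, plus, opp in Hy; simpl in Hy.
  pose proof (Rmin_l (x - p) (q - x)). pose proof (Rmin_r (x - p) (q - x)). lra.
Qed.

Lemma interval_shift_bounds a b K A B : a < b ->
  (forall x, a < x < b -> A < x + K < B) -> A - K <= a /\ b <= B - K.
Proof.
  intros Hab H. split.
  - destruct (Rle_or_lt (A - K) a) as [h | h]; [exact h | exfalso].
    set (e := Rmin (b - a) (A - K - a) / 2).
    assert (0 < Rmin (b - a) (A - K - a)) by (apply Rmin_pos; lra).
    pose proof (Rmin_l (b - a) (A - K - a)). pose proof (Rmin_r (b - a) (A - K - a)).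
    specialize (H (a + e)). unfold e in H. lra.
  - destruct (Rle_or_lt b (B - K)) as [h | h]; [exact h | exfalso].
    set (e := Rmin (b - a) (b - (B - K)) / 2).
    assert (0 < Rmin (b - a) (b - (B - K))) by (apply Rmin_pos; lra).
    pose proof (Rmin_l (b - a) (b - (B - K))). pose proof (Rmin_r (b - a) (b - (B - K))).
    specialize (H (b - e)). unfold e in H. lra.
Qed.

Lemma cos_lt_cos_Rabs p q : Rabs p < Rabs q -> Rabs q <= PI -> cos q < cos p.
Proof.
  intros Hpq Hq.
  assert (Habs : forall t, cos (Rabs t) = cos t).
  { intros t. unfold Rabs. destruct (Rcase_abs t); [apply cos_neg | reflexivity]. }
  rewrite <- (Habs p), <- (Habs q). pose proof (Rabs_pos p).
  apply cos_decreasing_1; lra.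
Qed.

Lemma cos_lt_1 t : t <> 0 -> Rabs t <= PI -> cos t < 1.
Proof.
  intros Ht Hb. rewrite <- cos_0. apply cos_lt_cos_Rabs; [| exact Hb].
  rewrite Rabs_R0. now apply Rabs_pos_lt.
Qed.

Section Abscissa.

Variable c : R.
Hypothesis Hc : 1 < c.

Definition height (t : R) : R := sqrt (2 * (c - cos t)).

Lemma height_pos t : 0 < height t.
Proof. apply sqrt_lt_R0. pose proof (COS_bound t). lra. Qed.

Lemma height_lt_height s t : cos t < cos s -> height s < height t.
Proof. intros H. apply sqrt_lt_1; pose proof (COS_bound s); lra. Qed.

Lemma is_derive_height t : is_derive height t (sin t / height t).
Proof.
  pose proof (COS_bound t). pose proof (height_pos t). unfold height in *.
  auto_derive; unfold Rminus in *; [lra | field; lra].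
Qed.

Definition xi_rate (t : R) : R := cos t / height t.

Lemma xi_rate_pos t : -(PI/2) < t < PI/2 -> 0 < xi_rate t.
Proof.
  intros Ht. pose proof (cos_gt_0 t (proj1 Ht) (proj2 Ht)). pose proof (height_pos t).
  now apply Rdiv_lt_0_compat.
Qed.

Lemma continuous_xi_rate t : continuous xi_rate t.
Proof.
  apply (ex_derive_continuous (K := R_AbsRing) (V := R_NormedModule)).
  pose proof (COS_bound t). pose proof (height_pos t). unfold xi_rate, height in *.
  auto_derive. unfold Rminus in *. repeat split; lra.
Qed.

Definition xi_of_psi (t : R) : R := RInt xi_rate 0 t.

Lemma is_derive_xi_of_psi t : is_derive xi_of_psi t (xi_rate t).
Proof.
  apply (is_derive_RInt xi_rate xi_of_psi 0 t); [| apply continuous_xi_rate].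
  apply filter_forall. intros y. apply (RInt_correct (V := R_CompleteNormedModule)).
  apply ex_RInt_continuous. intros; apply continuous_xi_rate.
Qed.

Lemma xi_of_psi_0 : xi_of_psi 0 = 0.
Proof. apply (RInt_point (V := R_CompleteNormedModule)). Qed.

Lemma xi_of_psi_incr x y : -(PI/2) <= x -> x < y -> y <= PI/2 -> xi_of_psi x < xi_of_psi y.
Proof.
  intros Hx Hxy Hy. apply (incr_of_is_derive_pos xi_of_psi xi_rate); [exact Hxy | |].
  - intros; apply is_derive_xi_of_psi.
  - intros; apply xi_rate_pos; lra.
Qed.

Lemma xi_of_psi_le x y : -(PI/2) <= x -> x <= y -> y <= PI/2 -> xi_of_psi x <= xi_of_psi y.
Proof.
  intros Hx Hxy Hy. destruct (Req_dec x y) as [-> | Hne]; [lra |].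
  left; apply xi_of_psi_incr; lra.
Qed.

Lemma xi_of_psi_lt_inv x y : -(PI/2) <= x <= PI/2 -> -(PI/2) <= y <= PI/2 ->
  xi_of_psi x < xi_of_psi y -> x < y.
Proof.
  intros Hx Hy H. destruct (Rlt_or_le x y) as [h | h]; [exact h | exfalso].
  pose proof (xi_of_psi_le y x). lra.
Qed.

Lemma xi_of_psi_inj x y : -(PI/2) <= x <= PI/2 -> -(PI/2) <= y <= PI/2 ->
  xi_of_psi x = xi_of_psi y -> x = y.
Proof.
  intros Hx Hy H. destruct (Rtotal_order x y) as [h | [h | h]]; [| exact h |].
  - pose proof (xi_of_psi_incr x y). lra.
  - pose proof (xi_of_psi_incr y x). lra.
Qed.

(* [xi_rate t <= cos t / height 0] with equality only at [t = 0], and [cos t / height 0]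
   integrates to [2 / height 0 = sqrt (2 / (c - 1))] over [-PI/2, PI/2]. *)
Lemma xi_of_psi_range_lt : xi_of_psi (PI/2) - xi_of_psi (-(PI/2)) < sqrt (2 / (c - 1)).
Proof.
  pose proof PI_RGT_0 as HPI. set (k := height 0).
  assert (Hk : 0 < k) by apply height_pos.
  set (f := fun t => sin t / k - xi_of_psi t).
  assert (Hdf : forall t, is_derive f t (cos t / k - xi_rate t)).
  { intros t. apply @is_derive_minus; [| apply is_derive_xi_of_psi].
    auto_derive; [lra | field; lra]. }
  assert (Hpos : forall t, -(PI/2) < t < PI/2 -> t <> 0 -> 0 < cos t / k - xi_rate t).
  { intros t Ht Hn. unfold xi_rate.
    pose proof (cos_gt_0 t (proj1 Ht) (proj2 Ht)). pose proof (height_pos t).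
    assert (k < height t).
    { apply height_lt_height. rewrite cos_0. apply cos_lt_1; [exact Hn |].
      apply Rabs_le; lra. }
    assert (/ height t < / k) by (apply Rinv_lt_contravar; nra).
    unfold Rdiv. nra. }
  assert (D1 : f (-(PI/2)) < f 0).
  { apply (incr_of_is_derive_pos f (fun t => cos t / k - xi_rate t)); [lra | intros; apply Hdf |].
    intros; apply Hpos; lra. }
  assert (D2 : f 0 < f (PI/2)).
  { apply (incr_of_is_derive_pos f (fun t => cos t / k - xi_rate t)); [lra | intros; apply Hdf |].
    intros; apply Hpos; lra. }
  unfold f in D1, D2. rewrite sin_neg, sin_PI2, sin_0 in *.
  assert (Hk2 : k * k = 2 * (c - 1)) by (unfold k, height; rewrite cos_0; apply sqrt_sqrt; lra).
  assert (E : sqrt (2 / (c - 1)) = 2 / k).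
  { apply sqrt_lem_1; try (apply Rlt_le, Rdiv_lt_0_compat; lra).
    replace (c - 1) with (k * k / 2) by lra. field; lra. }
  rewrite E. unfold Rdiv in *. lra.
Qed.

(* Unspecified outside [[xi_of_psi (-(PI/2)), xi_of_psi (PI/2)]]. *)
Definition psi_of_xi (s : R) : R :=
  epsilon (inhabits 0) (fun t => -(PI/2) <= t <= PI/2 /\ xi_of_psi t = s).

Lemma continuity_pt_xi_of_psi t : continuity_pt xi_of_psi t.
Proof. apply (is_derive_continuity_pt _ _ (xi_rate t)), is_derive_xi_of_psi. Qed.

Lemma psi_of_xi_spec s : xi_of_psi (-(PI/2)) <= s <= xi_of_psi (PI/2) ->
  -(PI/2) <= psi_of_xi s <= PI/2 /\ xi_of_psi (psi_of_xi s) = s.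
Proof.
  intros Hs. pose proof PI_RGT_0. unfold psi_of_xi. apply epsilon_spec.
  destruct (Req_dec s (xi_of_psi (-(PI/2)))) as [E | N1]; [exists (-(PI/2)); split; [lra | easy] |].
  destruct (Req_dec s (xi_of_psi (PI/2))) as [E | N2]; [exists (PI/2); split; [lra | easy] |].
  destruct (IVT_interv (fun t => xi_of_psi t - s) (-(PI/2)) (PI/2)) as [z [Hz Ez]];
    [| lra | lra | lra | exists z; split; [exact Hz | lra]].
  intros. apply continuity_pt_minus; [apply continuity_pt_xi_of_psi | apply continuity_pt_const; now intros ? ?].
Qed.

Lemma psi_of_xi_of_psi t : -(PI/2) <= t <= PI/2 -> psi_of_xi (xi_of_psi t) = t.
Proof.
  intros Ht. assert (xi_of_psi (-(PI/2)) <= xi_of_psi t <= xi_of_psi (PI/2)).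
  { pose proof PI_RGT_0. split; apply xi_of_psi_le; lra. }
  destruct (psi_of_xi_spec _ H) as [H1 H2]. now apply xi_of_psi_inj.
Qed.

Lemma psi_of_xi_bound s : xi_of_psi (-(PI/2)) < s < xi_of_psi (PI/2) ->
  -(PI/2) < psi_of_xi s < PI/2.
Proof.
  intros Hs. destruct (psi_of_xi_spec s ltac:(lra)) as [H1 H2].
  split; apply Rnot_le_lt; intros Hle.
  - replace (psi_of_xi s) with (-(PI/2)) in H2 by lra. lra.
  - replace (psi_of_xi s) with (PI/2) in H2 by lra. lra.
Qed.

Lemma is_derive_psi_of_xi s : xi_of_psi (-(PI/2)) < s < xi_of_psi (PI/2) ->
  is_derive psi_of_xi s (height (psi_of_xi s) / cos (psi_of_xi s)).
Proof.
  intros Hs. pose proof PI_RGT_0.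
  set (A := xi_of_psi (-(PI/2))). set (B := xi_of_psi (PI/2)).
  set (Gder := fun t => exist (fun l => derivable_pt_lim xi_of_psi t l) (xi_rate t)
                  (proj1 (is_derive_Reals _ _ _) (is_derive_xi_of_psi t))).
  assert (HA : psi_of_xi A = -(PI/2)) by (apply psi_of_xi_of_psi; lra).
  assert (HB : psi_of_xi B = PI/2) by (apply psi_of_xi_of_psi; lra).
  pose proof (psi_of_xi_bound s Hs) as Ho.
  assert (Pinc : psi_of_xi A <= psi_of_xi s <= psi_of_xi B) by (rewrite HA, HB; lra).
  assert (Hcont : continuity_pt psi_of_xi s).
  { apply (continuity_pt_recip_interv xi_of_psi psi_of_xi (-(PI/2)) (PI/2)); [lra | | | | | exact Hs].
    - intros; now apply xi_of_psi_incr.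
    - intros x H1 H2. unfold comp, id. apply psi_of_xi_spec; lra.
    - intros x H1 H2. apply psi_of_xi_spec; lra.
    - intros; apply continuity_pt_xi_of_psi. }
  assert (Hcomp : forall x, A <= x <= B -> comp xi_of_psi psi_of_xi x = id x).
  { intros x Hx. apply psi_of_xi_spec, Hx. }
  assert (Egd : derive_pt xi_of_psi (psi_of_xi s) (Gder (psi_of_xi s)) = xi_rate (psi_of_xi s)).
  { apply derive_pt_eq_0, is_derive_Reals, is_derive_xi_of_psi. }
  assert (Hne : derive_pt xi_of_psi (psi_of_xi s) (Gder (psi_of_xi s)) <> 0).
  { rewrite Egd. apply Rgt_not_eq, xi_rate_pos, Ho. }
  pose proof (derivable_pt_lim_recip_interv xi_of_psi psi_of_xi A B s
     (fun a _ => Gder a) Hcont ltac:(unfold A, B in *; lra) Hs Pinc Hcomp Hne) as D.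
  change (derivable_pt_lim psi_of_xi s (1 / derive_pt xi_of_psi (psi_of_xi s) (Gder (psi_of_xi s)))) in D.
  rewrite Egd in D. apply is_derive_Reals.
  replace (height (psi_of_xi s) / cos (psi_of_xi s)) with (1 / xi_rate (psi_of_xi s)); [exact D |].
  unfold xi_rate. pose proof (height_pos (psi_of_xi s)).
  pose proof (cos_gt_0 _ (proj1 Ho) (proj2 Ho)). field. lra.
Qed.

End Abscissa.

Lemma xi_rate_lt_of_lt c1 c2 t : 1 < c1 < c2 -> -(PI/2) < t < PI/2 ->
  xi_rate c2 t < xi_rate c1 t.
Proof.
  intros Hc Ht. unfold xi_rate, height.
  pose proof (cos_gt_0 t (proj1 Ht) (proj2 Ht)).
  pose proof (height_pos c1 ltac:(lra) t). pose proof (height_pos c2 ltac:(lra) t).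
  unfold height in *.
  assert (sqrt (2 * (c1 - cos t)) < sqrt (2 * (c2 - cos t))).
  { apply sqrt_lt_1; pose proof (COS_bound t); lra. }
  apply Rmult_lt_compat_l; [lra |]. apply Rinv_lt_contravar; nra.
Qed.

Lemma xi_of_psi_sub_incr c1 c2 x y : 1 < c1 < c2 -> -(PI/2) <= x -> x < y -> y <= PI/2 ->
  xi_of_psi c1 x - xi_of_psi c2 x < xi_of_psi c1 y - xi_of_psi c2 y.
Proof.
  intros Hc Hx Hxy Hy.
  apply (incr_of_is_derive_pos (fun t => xi_of_psi c1 t - xi_of_psi c2 t)
    (fun t => xi_rate c1 t - xi_rate c2 t)); [exact Hxy | |].
  - intros; apply @is_derive_minus; apply is_derive_xi_of_psi; lra.
  - intros. pose proof (xi_rate_lt_of_lt c1 c2 z Hc ltac:(lra)). lra.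
Qed.

Lemma height_lt_of_xi_of_psi_eq c1 c2 p1 p2 : 1 < c1 < c2 ->
  -(PI/2) < p1 < PI/2 -> -(PI/2) < p2 < PI/2 ->
  xi_of_psi c1 p1 = xi_of_psi c2 p2 -> height c1 p1 < height c2 p2.
Proof.
  intros Hc H1 H2 E. pose proof PI_RGT_0.
  pose proof (xi_of_psi_0 c1) as Z1. pose proof (xi_of_psi_0 c2) as Z2.
  assert (cos p2 <= cos p1).
  { destruct (Rtotal_order p2 0) as [h | [-> | h]].
    - pose proof (xi_of_psi_sub_incr c1 c2 p2 0 Hc ltac:(lra) h ltac:(lra)).
      pose proof (xi_of_psi_incr c2 ltac:(lra) p2 0 ltac:(lra) h ltac:(lra)).
      assert (p2 < p1) by (apply (xi_of_psi_lt_inv c1); lra).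
      assert (p1 < 0) by (apply (xi_of_psi_lt_inv c1); lra).
      left; apply cos_lt_cos_Rabs; rewrite ?Rabs_left by lra; lra.
    - rewrite Z2, <- Z1 in E. apply (xi_of_psi_inj c1) in E; [| lra | lra | lra].
      rewrite E. lra.
    - pose proof (xi_of_psi_sub_incr c1 c2 0 p2 Hc ltac:(lra) h ltac:(lra)).
      pose proof (xi_of_psi_incr c2 ltac:(lra) 0 p2 ltac:(lra) h ltac:(lra)).
      assert (p1 < p2) by (apply (xi_of_psi_lt_inv c1); lra).
      assert (0 < p1) by (apply (xi_of_psi_lt_inv c1); lra).
      left; apply cos_lt_cos_Rabs; rewrite ?Rabs_right by lra; lra. }
  apply sqrt_lt_1; pose proof (COS_bound p1); pose proof (COS_bound p2); lra.
Qed.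

(* [sol a b U] is convertible to [a < b /\ forall x, a < x < b -> sol_at U x]. *)
Definition sol_at (U : R -> R) (x : R) : Prop :=
  ex_derive U x /\ ex_derive (Derive U) x /\
  continuous (Derive (Derive U)) x /\
  is_derive (fun y => sin (psi U y)) x (U x).

Lemma psi_bound U x : -(PI/2) < psi U x < PI/2.
Proof. unfold psi. pose proof (atan_bound (Derive U x)). lra. Qed.

Lemma is_derive_psi U x : sol_at U x ->
  exists d, is_derive (psi U) x d /\ cos (psi U x) * d = U x.
Proof.
  intros [_ [[d2 Hd2] [_ Hsin]]].
  assert (Hp : is_derive (psi U) x (scal d2 (/ (1 + (Derive U x)²))))
    by (apply (is_derive_comp atan (Derive U) x); [apply is_derive_atan | exact Hd2]).
  eexists; split; [exact Hp |].
  pose proof (is_derive_comp sin (psi U) x _ _ (is_derive_sin (psi U x)) Hp) as Hs2.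
  apply is_derive_unique in Hsin, Hs2. rewrite Hsin in Hs2. rewrite Hs2.
  unfold scal; simpl; unfold mult; simpl. ring.
Qed.

Lemma first_int_sqr c a b U x : first_int c a b U -> a < x < b ->
  U x ^ 2 = 2 * (c - cos (psi U x)).
Proof. intros Hf Hx. specialize (Hf x Hx). lra. Qed.

Lemma first_int_height c a b U x : first_int c a b U -> a < x < b -> 0 < U x ->
  U x = height c (psi U x).
Proof. intros Hf Hx Hp. unfold height. rewrite <- (first_int_sqr c a b U x Hf Hx), sqrt_pow2; lra. Qed.

Lemma first_int_neq0 c a b U x : first_int c a b U -> 1 < c -> a < x < b -> U x <> 0.
Proof.
  intros Hf Hc Hx E. pose proof (first_int_sqr c a b U x Hf Hx) as H. rewrite E in H.
  pose proof (COS_bound (psi U x)). lra.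
Qed.

Lemma pos_of_nonvanishing (f : R -> R) a b x y :
  (forall z, a < z < b -> continuity_pt f z) -> (forall z, a < z < b -> f z <> 0) ->
  a < x < b -> a < y < b -> 0 < f x -> 0 < f y.
Proof.
  intros Hcont Hne Hx Hy Hfx. apply Rnot_le_lt. intros Hfy.
  assert (f y < 0) by (pose proof (Hne y Hy); lra).
  destruct (Rtotal_order x y) as [Hxy | [<- | Hxy]]; [| lra |].
  - destruct (IVT_interv (fun z => - f z) x y) as [z [Hz Ez]]; [| lra | lra | lra |].
    + intros; apply continuity_pt_opp, Hcont; lra.
    + apply (Hne z); lra.
  - destruct (IVT_interv f y x) as [z [Hz Ez]]; [intros; apply Hcont; lra | lra | lra | lra |].
    apply (Hne z); lra.
Qed.

Lemma sol_continuity_pt a b U x : sol a b U -> a < x < b -> continuity_pt U x.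
Proof. intros [_ Hs] Hx. destruct (Hs x Hx) as [[l Hl] _]. exact (is_derive_continuity_pt _ _ l Hl). Qed.

Lemma sol_pos c a b U p : sol a b U -> first_int c a b U -> 1 < c ->
  a < p < b -> 0 < U p -> forall x, a < x < b -> 0 < U x.
Proof.
  intros Hs Hf Hc Hp Up x Hx.
  apply (pos_of_nonvanishing U a b p); try assumption.
  - intros; now apply (sol_continuity_pt a b).
  - intros; now apply (first_int_neq0 c a b).
Qed.

(* On a positive solution [psi' = U / cos psi = height / cos psi = 1 / xi_rate psi]. *)
Lemma xi_of_psi_sol c a b U : sol a b U -> first_int c a b U -> 1 < c ->
  (forall x, a < x < b -> 0 < U x) ->
  exists K, forall x, a < x < b -> xi_of_psi c (psi U x) = x + K.
Proof.
  intros Hs Hf Hc Hpos. pose proof (proj1 Hs) as Hab. set (m := (a + b) / 2).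
  exists (xi_of_psi c (psi U m) - m). intros x Hx.
  enough (xi_of_psi c (psi U x) - x = xi_of_psi c (psi U m) - m) by lra.
  apply (const_of_is_derive_0 (fun y => xi_of_psi c (psi U y) - y) a b); [| exact Hx | unfold m; lra].
  intros z Hz. destruct (is_derive_psi U z (proj2 Hs z Hz)) as [d [Hd Ed]].
  pose proof (is_derive_comp (xi_of_psi c) (psi U) z _ _ (is_derive_xi_of_psi c Hc _) Hd) as H1.
  pose proof (is_derive_minus _ _ z _ _ H1 (is_derive_id z)) as H2.
  replace 0 with (minus (scal d (xi_rate c (psi U z))) one); [exact H2 |].
  unfold scal, minus, plus, opp, one; simpl; unfold mult; simpl.
  unfold xi_rate. rewrite <- (first_int_height c a b U z Hf Hz (Hpos z Hz)).
  pose proof (Hpos z Hz). rewrite <- Ed in *.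
  assert (cos (psi U z) <> 0 /\ d <> 0) as [] by (split; intros E; rewrite E in *; lra).
  field. split; assumption.
Qed.

Lemma psi_opp U x : psi (fun y => - U y) x = - psi U x.
Proof. unfold psi. rewrite Derive_opp. apply atan_opp. Qed.

Lemma Derive_opp_fun (U : R -> R) : Derive (fun x => - U x) = fun x => - Derive U x.
Proof. apply functional_extensionality. intros; apply Derive_opp. Qed.

Lemma sol_opp a b U : sol a b U -> sol a b (fun x => - U x).
Proof.
  intros [Hab Hs]. split; [exact Hab |]. intros x Hx. destruct (Hs x Hx) as [H1 [H2 [H3 H4]]].
  rewrite !Derive_opp_fun. split; [| split; [| split]].
  - now auto_derive.
  - now auto_derive.
  - now apply (continuous_opp (K := R_AbsRing) (V := R_NormedModule)).
  - apply is_derive_opp in H4. apply (is_derive_ext (fun y => - sin (psi U y))); [| exact H4].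
    intros t. now rewrite psi_opp, sin_neg.
Qed.

Lemma first_int_opp c a b U : first_int c a b U -> first_int c a b (fun x => - U x).
Proof. intros Hf x Hx. rewrite psi_opp, cos_neg. specialize (Hf x Hx). lra. Qed.

Lemma pos_sol_length_lt a b c U : sol a b U -> first_int c a b U -> 1 < c ->
  (forall x, a < x < b -> 0 < U x) -> b - a < sqrt (2 / (c - 1)).
Proof.
  intros Hs Hf Hc Hp. pose proof PI_RGT_0.
  destruct (xi_of_psi_sol c a b U Hs Hf Hc Hp) as [K HK].
  assert (Hin : forall x, a < x < b -> xi_of_psi c (-(PI/2)) < x + K < xi_of_psi c (PI/2)).
  { intros x Hx. rewrite <- HK by exact Hx. pose proof (psi_bound U x).
    split; apply xi_of_psi_incr; lra. }
  destruct (interval_shift_bounds a b K _ _ (proj1 Hs) Hin).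
  pose proof (xi_of_psi_range_lt c Hc). lra.
Qed.

Lemma sol_length_lt a b c U : sol a b U -> first_int c a b U -> 1 < c ->
  b - a < sqrt (2 / (c - 1)).
Proof.
  intros Hs Hf Hc. pose proof (proj1 Hs) as Hab. set (m := (a + b) / 2).
  assert (Hm : a < m < b) by (unfold m; lra).
  destruct (Rlt_or_le 0 (U m)) as [h | h].
  - apply (pos_sol_length_lt a b c U Hs Hf Hc). now apply (sol_pos c a b U m).
  - pose proof (first_int_neq0 c a b U m Hf Hc Hm).
    pose proof (sol_opp a b U Hs) as Hs'. pose proof (first_int_opp c a b U Hf) as Hf'.
    apply (pos_sol_length_lt a b c _ Hs' Hf' Hc).
    apply (sol_pos c a b _ m Hs' Hf' Hc Hm). lra.
Qed.

Lemma sol_at_ext p q U V x : p < x < q -> (forall y, p < y < q -> V y = U y) ->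
  sol_at U x -> sol_at V x.
Proof.
  intros Hx HE [H1 [H2 [H3 H4]]].
  assert (L : forall (P : R -> Prop), (forall y, p < y < q -> P y) -> locally x P).
  { intros P HP. apply (filter_imp (fun y => p < y < q)); [exact HP | now apply locally_interval]. }
  assert (DE : forall y, p < y < q -> Derive U y = Derive V y).
  { intros y Hy. apply Derive_ext_loc.
    apply (filter_imp (fun y => p < y < q)); [| now apply locally_interval].
    intros; symmetry; auto. }
  assert (DDE : locally x (fun y => Derive (Derive U) y = Derive (Derive V) y)).
  { apply L. intros y Hy. apply Derive_ext_loc.
    apply (filter_imp (fun y => p < y < q)); [exact DE | now apply locally_interval]. }
  split; [| split; [| split]].
  - apply (ex_derive_ext_loc U); [| exact H1]. apply L. intros; symmetry; auto.
  - apply (ex_derive_ext_loc (Derive U)); [apply L, DE | exact H2].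
  - exact (continuous_ext_loc _ _ _ DDE H3).
  - rewrite HE by exact Hx. apply (is_derive_ext_loc (fun y => sin (psi U y))); [| exact H4].
    apply L. intros y Hy. unfold psi. now rewrite DE.
Qed.

Lemma psi_of_xi_0 c : 1 < c -> psi_of_xi c 0 = 0.
Proof.
  intros Hc. pose proof PI_RGT_0.
  rewrite <- (xi_of_psi_0 c) at 1. apply psi_of_xi_of_psi; lra.
Qed.

Lemma height_0_le c t : height c 0 <= height c t.
Proof. apply sqrt_le_1_alt. rewrite cos_0. pose proof (COS_bound t). lra. Qed.

Section ModelCurve.

Variables c K : R.
Hypothesis Hc : 1 < c.

Definition model_angle (y : R) : R := psi_of_xi c (y + K).
Definition model_curve (y : R) : R := height c (model_angle y).
Definition model_dom (y : R) : Prop := xi_of_psi c (-(PI/2)) < y + K < xi_of_psi c (PI/2).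

Lemma locally_model_dom y : model_dom y -> locally y model_dom.
Proof.
  intros Hy. apply (filter_imp (fun z => xi_of_psi c (-(PI/2)) - K < z < xi_of_psi c (PI/2) - K)).
  - unfold model_dom. intros; lra.
  - apply locally_interval. unfold model_dom in Hy. lra.
Qed.

Lemma model_angle_bound y : model_dom y -> -(PI/2) < model_angle y < PI/2.
Proof. intros Hy. now apply psi_of_xi_bound. Qed.

Lemma cos_model_angle_pos y : model_dom y -> 0 < cos (model_angle y).
Proof. intros Hy. destruct (model_angle_bound y Hy). now apply cos_gt_0. Qed.

Lemma is_derive_model_angle y : model_dom y ->
  is_derive model_angle y (height c (model_angle y) / cos (model_angle y)).
Proof.
  intros Hy.
  pose proof (is_derive_comp (psi_of_xi c) (fun z => z + K) y _ _ (is_derive_psi_of_xi c Hc _ Hy)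
    (is_derive_plus _ _ y 1 0 (is_derive_id y) (is_derive_const K y))) as D.
  unfold scal, plus in D; simpl in D; unfold mult, plus in D; simpl in D.
  rewrite Rplus_0_r, Rmult_1_l in D. exact D.
Qed.

Lemma is_derive_model_curve y : model_dom y -> is_derive model_curve y (tan (model_angle y)).
Proof.
  intros Hy. pose proof (cos_model_angle_pos y Hy). pose proof (height_pos c Hc (model_angle y)).
  pose proof (is_derive_comp (height c) model_angle y _ _
                (is_derive_height c Hc _) (is_derive_model_angle y Hy)) as D.
  unfold scal in D; simpl in D; unfold mult in D; simpl in D.
  replace (tan (model_angle y)) with
    (height c (model_angle y) / cos (model_angle y) * (sin (model_angle y) / height c (model_angle y)));
    [exact D | unfold tan; field; lra].
Qed.

Lemma psi_model_curve y : model_dom y -> psi model_curve y = model_angle y.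
Proof.
  intros Hy. unfold psi. rewrite (is_derive_unique _ _ _ (is_derive_model_curve y Hy)).
  now apply atan_tan, model_angle_bound.
Qed.

Lemma is_derive_tan_model_angle y : model_dom y ->
  is_derive (fun z => tan (model_angle z)) y
    ((tan (model_angle y) ^ 2 + 1) * (height c (model_angle y) / cos (model_angle y))).
Proof.
  intros Hy.
  pose proof (is_derive_comp tan model_angle y _ _ (is_derive_tan _ (Rgt_not_eq _ _ (cos_model_angle_pos y Hy)))
                (is_derive_model_angle y Hy)) as D.
  unfold scal in D; simpl in D; unfold mult in D; simpl in D. rewrite Rmult_comm. exact D.
Qed.

Lemma continuous_model_curve_second t : -(PI/2) < t < PI/2 ->
  continuous (fun t => (tan t ^ 2 + 1) * (height c t / cos t)) t.
Proof.
  intros Ht. apply (ex_derive_continuous (K := R_AbsRing) (V := R_NormedModule)).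
  pose proof (cos_gt_0 _ (proj1 Ht) (proj2 Ht)). pose proof (COS_bound t). pose proof (height_pos c Hc t).
  unfold tan, height in *. auto_derive. unfold Rminus in *. repeat split; lra.
Qed.

Lemma locally_Derive_model_curve y : model_dom y ->
  locally y (fun z => tan (model_angle z) = Derive model_curve z).
Proof.
  intros Hy. apply (filter_imp model_dom); [| now apply locally_model_dom].
  intros z Hz. symmetry. now apply is_derive_unique, is_derive_model_curve.
Qed.

Lemma model_curve_sol_at y : model_dom y -> sol_at model_curve y.
Proof.
  intros Hy. set (second := fun t => (tan t ^ 2 + 1) * (height c t / cos t)).
  split; [| split; [| split]].
  - eexists; now apply is_derive_model_curve.
  - apply (ex_derive_ext_loc _ _ _ (locally_Derive_model_curve y Hy)).
    eexists; now apply is_derive_tan_model_angle.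
  - apply (continuous_ext_loc _ (fun z => second (model_angle z))).
    + apply (filter_imp model_dom); [| now apply locally_model_dom].
      intros z Hz. rewrite <- (Derive_ext_loc _ _ z (locally_Derive_model_curve z Hz)).
      symmetry. now apply is_derive_unique, is_derive_tan_model_angle.
    + apply (continuous_comp model_angle second).
      * apply (ex_derive_continuous (K := R_AbsRing) (V := R_NormedModule)).
        eexists; now apply is_derive_model_angle.
      * now apply continuous_model_curve_second, model_angle_bound.
  - apply (is_derive_ext_loc (fun z => sin (model_angle z))).
    + apply (filter_imp model_dom); [| now apply locally_model_dom].
      intros z Hz. now rewrite psi_model_curve.
    + pose proof (is_derive_comp sin model_angle y _ _ (is_derive_sin _) (is_derive_model_angle y Hy)) as D.
      unfold scal in D; simpl in D; unfold mult in D; simpl in D.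
      pose proof (cos_model_angle_pos y Hy).
      replace (model_curve y) with (height c (model_angle y) / cos (model_angle y) * cos (model_angle y));
        [exact D | unfold model_curve; field; lra].
Qed.

Lemma model_curve_at_min : model_curve (-K) = height c 0.
Proof. unfold model_curve, model_angle. now rewrite Rplus_opp_l, psi_of_xi_0. Qed.

Lemma model_curve_min_unique y : model_dom y -> model_curve y <= model_curve (-K) -> y = -K.
Proof.
  intros Hy Hm. rewrite model_curve_at_min in Hm.
  assert (E : model_angle y = 0).
  { destruct (Req_dec (model_angle y) 0) as [E | Hne]; [exact E | exfalso].
    assert (height c 0 < model_curve y); [| lra].
    destruct (model_angle_bound y Hy). apply height_lt_height; [exact Hc |].
    rewrite cos_0. apply cos_lt_1; [exact Hne | apply Rabs_le; lra]. }
  destruct (psi_of_xi_spec c Hc (y + K) ltac:(unfold model_dom in Hy; lra)) as [_ Ex].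
  unfold model_angle in E. rewrite E, xi_of_psi_0 in Ex. lra.
Qed.

End ModelCurve.

Lemma sol_extend_to_min a b c U : sol a b U -> first_int c a b U -> 1 < c ->
  (exists x, a < x < b /\ 0 < U x) ->
  exists (a' b' : R) (V : R -> R),
    sol a' b' V /\ extends a' b' V a b U /\
    exists x0, a' < x0 < b' /\ 0 < V x0 /\
      (forall x, a' < x < b' -> V x0 <= V x) /\
      (forall x1, a' < x1 < b' ->
         (forall x, a' < x < b' -> V x1 <= V x) -> x1 = x0).
Proof.
  intros Hs Hf Hc [p [Hp Up]]. pose proof PI_RGT_0.
  pose proof (sol_pos c a b U p Hs Hf Hc Hp Up) as Hpos.
  destruct (xi_of_psi_sol c a b U Hs Hf Hc Hpos) as [K HK].
  set (A := xi_of_psi c (-(PI/2))). set (B := xi_of_psi c (PI/2)).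
  assert (HA : A < 0) by (unfold A; rewrite <- (xi_of_psi_0 c); apply xi_of_psi_incr; lra).
  assert (HB : 0 < B) by (unfold B; rewrite <- (xi_of_psi_0 c); apply xi_of_psi_incr; lra).
  assert (Hin : forall x, a < x < b -> A < x + K < B).
  { intros x Hx. rewrite <- HK by exact Hx. pose proof (psi_bound U x).
    unfold A, B; split; apply xi_of_psi_incr; lra. }
  exists (A - K), (B - K), (model_curve c K). split; [| split].
  - split; [lra |]. intros y Hy. apply model_curve_sol_at; [exact Hc | unfold model_dom, A, B in *; lra].
  - destruct (interval_shift_bounds a b K A B (proj1 Hs) Hin). split; [lra | split; [lra |]].
    intros x Hx. unfold model_curve, model_angle. rewrite <- HK, psi_of_xi_of_psi by
      (exact Hx || (pose proof (psi_bound U x); lra)).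
    symmetry; now apply (first_int_height c a b U x Hf Hx), Hpos.
  - exists (-K). rewrite model_curve_at_min by exact Hc. split; [lra | split; [| split]].
    + now apply height_pos.
    + intros x _. apply height_0_le.
    + intros x1 Hx1 Hm. apply (model_curve_min_unique c K Hc); [unfold model_dom, A, B in *; lra |].
      apply Hm. lra.
Qed.

Lemma sol_glue a1 b1 a2 b2 U1 U2 : sol a1 b1 U1 -> sol a2 b2 U2 -> a1 < b2 -> a2 < b1 ->
  (forall y, a1 < y < b1 -> a2 < y < b2 -> U1 y = U2 y) ->
  exists V, sol (Rmin a1 a2) (Rmax b1 b2) V /\
    extends (Rmin a1 a2) (Rmax b1 b2) V a1 b1 U1 /\
    extends (Rmin a1 a2) (Rmax b1 b2) V a2 b2 U2.
Proof.
  intros [Hab1 Hs1] [Hab2 Hs2] H12 H21 Hagree.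
  set (V := fun y => if Rlt_dec a1 y then if Rlt_dec y b1 then U1 y else U2 y else U2 y).
  assert (V1 : forall y, a1 < y < b1 -> V y = U1 y).
  { intros y Hy. unfold V. destruct (Rlt_dec a1 y); [| lra]. destruct (Rlt_dec y b1); [easy | lra]. }
  assert (V2 : forall y, a2 < y < b2 -> V y = U2 y).
  { intros y Hy. unfold V. destruct (Rlt_dec a1 y); [| easy]. destruct (Rlt_dec y b1); [| easy].
    apply Hagree; lra. }
  pose proof (Rmin_l a1 a2). pose proof (Rmin_r a1 a2). pose proof (Rmax_l b1 b2). pose proof (Rmax_r b1 b2).
  exists V. split; [split; [lra |] | split; repeat split; assumption].
  intros y Hy. destruct (Rlt_or_le a1 y); destruct (Rlt_or_le y b1).
  - apply (sol_at_ext a1 b1 U1); [lra | exact V1 | apply Hs1; lra].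
  - apply (sol_at_ext a2 b2 U2); [| exact V2 | apply Hs2]; unfold Rmin, Rmax in *;
      destruct (Rle_dec a1 a2), (Rle_dec b1 b2); lra.
  - apply (sol_at_ext a2 b2 U2); [| exact V2 | apply Hs2]; unfold Rmin, Rmax in *;
      destruct (Rle_dec a1 a2), (Rle_dec b1 b2); lra.
  - lra.
Qed.

Lemma normalized_curve_xi_of_psi a b U : normalized_curve a b U ->
  exists c, 1 < c /\ first_int c a b U /\ (forall x, a < x < b -> 0 < U x) /\
    (forall x, a < x < b -> xi_of_psi c (psi U x) = x).
Proof.
  intros [[Hs _] [[c [Hc Hf]] [Hpos [H0 Hmin]]]].
  exists c. do 3 (split; [assumption |]).
  destruct (xi_of_psi_sol c a b U Hs Hf Hc Hpos) as [K HK].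
  assert (Hpsi0 : psi U 0 = 0).
  { destruct (proj2 Hs 0 H0) as [[l Hl] _].
    unfold psi. rewrite (is_derive_unique _ _ _ Hl). apply is_derive_Reals in Hl.
    pose proof (deriv_minimum U a b 0 (exist _ l Hl) (proj1 H0) (proj2 H0)
                  (fun x h1 h2 => Hmin x (conj h1 h2))) as Hd.
    simpl in Hd. rewrite Hd. apply atan_0. }
  assert (K = 0) by (specialize (HK 0 H0); rewrite Hpsi0, xi_of_psi_0 in HK; lra).
  intros x Hx. rewrite HK by exact Hx. lra.
Qed.

Lemma normalized_curve_unique a1 b1 a2 b2 x U1 U2 :
  normalized_curve a1 b1 U1 -> normalized_curve a2 b2 U2 ->
  a1 < x < b1 -> a2 < x < b2 -> U1 x = U2 x ->
  a1 = a2 /\ b1 = b2 /\ (forall y, a1 < y < b1 -> U1 y = U2 y).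
Proof.
  intros N1 N2 Hx1 Hx2 Ex.
  destruct (normalized_curve_xi_of_psi a1 b1 U1 N1) as [c1 [Hc1 [Hf1 [Hp1 HG1]]]].
  destruct (normalized_curve_xi_of_psi a2 b2 U2 N2) as [c2 [Hc2 [Hf2 [Hp2 HG2]]]].
  assert (Hheight : forall y, a1 < y < b1 -> a2 < y < b2 ->
            U1 y = height c1 (psi U1 y) /\ U2 y = height c2 (psi U2 y)).
  { intros y Hy1 Hy2. split; [apply (first_int_height c1 a1 b1) | apply (first_int_height c2 a2 b2)];
      auto. }
  assert (Hxi : xi_of_psi c1 (psi U1 x) = xi_of_psi c2 (psi U2 x)) by now rewrite HG1, HG2.
  assert (Ec : c1 = c2).
  { destruct (Hheight x Hx1 Hx2) as [E1 E2].
    destruct (Rtotal_order c1 c2) as [h | [h | h]]; [exfalso | exact h | exfalso].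
    - pose proof (height_lt_of_xi_of_psi_eq c1 c2 _ _ ltac:(lra) (psi_bound U1 x) (psi_bound U2 x) Hxi).
      lra.
    - pose proof (height_lt_of_xi_of_psi_eq c2 c1 _ _ ltac:(lra) (psi_bound U2 x) (psi_bound U1 x)
                    (eq_sym Hxi)). lra. }
  subst c2.
  assert (Hagree : forall y, a1 < y < b1 -> a2 < y < b2 -> U1 y = U2 y).
  { intros y Hy1 Hy2. destruct (Hheight y Hy1 Hy2) as [-> ->]. f_equal.
    pose proof (psi_bound U1 y). pose proof (psi_bound U2 y).
    apply (xi_of_psi_inj c1 Hc1); [lra | lra |]. now rewrite HG1, HG2. }
  destruct N1 as [[Hs1 M1] _], N2 as [[Hs2 M2] _].
  destruct (sol_glue a1 b1 a2 b2 U1 U2 Hs1 Hs2 ltac:(lra) ltac:(lra) Hagree) as [V [HV [X1 X2]]].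
  destruct (M1 _ _ V HV X1), (M2 _ _ V HV X2).
  repeat split; [congruence | congruence |]. intros y Hy. apply Hagree; [exact Hy | congruence].
Qed.

Theorem theorem1 :
  (* (i) length bound *)
  (forall (a b c : R) (U : R -> R),
     sol a b U -> first_int c a b U -> 1 < c ->
     b - a < sqrt (2 / (c - 1))) /\
  (* (ii) extension across a unique positive minimum point *)
  (forall (a b c : R) (U : R -> R),
     sol a b U -> first_int c a b U -> 1 < c ->
     (exists x, a < x < b /\ 0 < U x) ->
     exists (a' b' : R) (V : R -> R),
       sol a' b' V /\ extends a' b' V a b U /\
       exists x0, a' < x0 < b' /\ 0 < V x0 /\
         (forall x, a' < x < b' -> V x0 <= V x) /\
         (forall x1, a' < x1 < b' ->
            (forall x, a' < x < b' -> V x1 <= V x) -> x1 = x0)) /\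
  (* (iii) the normalized maximal curves simply cover their union D+ *)
  (forall (a1 b1 a2 b2 x : R) (U1 U2 : R -> R),
     normalized_curve a1 b1 U1 -> normalized_curve a2 b2 U2 ->
     a1 < x < b1 -> a2 < x < b2 -> U1 x = U2 x ->
     a1 = a2 /\ b1 = b2 /\ (forall y, a1 < y < b1 -> U1 y = U2 y)).
Proof.
  split; [exact sol_length_lt |]. split; [exact sol_extend_to_min |]. exact normalized_curve_unique.
Qed.
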